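(* Suppose there exists a $\mathcal{KL}_{\rm gen}$-$\operatorname{Fin}(X^{\rm in})$ upper bound $(\gamma,\theta)$ for $(X^{\rm in},T,\varphi)$. Then there exists $h\in\Omega([0,1])$ such that $\nu_k\le h(e^{-k})$ for all $k\in\mathbb N$. If moreover $(\gamma,\theta)$ is useful for $\nu$, then $h$ can be chosen so that $\{k\in\mathbb N:\nu_k>h(0)\}\neq\emptyset$.
   Context: Standing data: a nonempty set $X^{\rm in}\subseteq\mathbb R^d$, a map $T:\mathbb R^d\to\mathbb R^d$ ($T^k$ its $k$-fold composition), $\varphi:\mathbb R^d\to\mathbb R$ with $\varphi(0)=0$; $\nu_k=\sup_{x\in X^{\rm in}}\varphi(T^k(x))$, assumed finite for every $k$; $G^{>}_\nu=\{k:\nu_k>\limsup_n\nu_n\}$. $\Omega([0,1])$: functions $h:\mathbb R\to\mathbb R$ whose restriction to $[0,1]$ is strictly increasing and continuous. For $f:\mathbb R^d\to\mathbb R\cup\{+\infty\}$, $\overline f=\sup_{X^{\rm in}}f$; $\operatorname{Fin}(X^{\rm in})=\{f:\overline f<+\infty\}$. $\mathcal{KL}_{\rm gen}$: functions $\gamma:\mathbb R\times\mathbb R_+\to\mathbb R$, increasing in the first variable for each fixed second variable and decreasing in the second variable for each fixed first variable (not necessarily strictly, not necessarily continuous). $(\gamma,\theta)\in\mathcal{KL}_{\rm gen}\times\operatorname{Fin}(X^{\rm in})$ is a $\mathcal{KL}_{\rm gen}$-$\operatorname{Fin}(X^{\rm in})$ upper bound if $\varphi(T^k(x))\le\gamma(\theta(x),k)$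 for all $k\in\mathbb N$, $x\in X^{\rm in}$; it is useful for $\nu$ if $\{k\in G^{>}_\nu:\inf_{t\ge0}\gamma(\overline\theta,t)<\nu_k\}\ne\emptyset$. *)

From HB Require Import structures.
From mathcomp Require Import all_boot all_order all_algebra.
From mathcomp Require Import all_classical all_reals all_analysis.
Set Implicit Arguments. Unset Strict Implicit. Unset Printing Implicit Defensive.
Import Order.TTheory GRing.Theory Num.Theory.
Import numFieldNormedType.Exports.
Local Open Scope classical_set_scope.
Local Open Scope ring_scope.

Section Defs.
Variables (R : realType) (d : nat).
Variables (Xin : set 'rV[R]_d) (T : 'rV[R]_d -> 'rV[R]_d) (phi : 'rV[R]_d -> R).

Definition nu (k : nat) : R := sup [set phi (iter k T x) | x in Xin].

Definition nu_finite : Prop :=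
  forall k : nat, has_ubound [set phi (iter k T x) | x in Xin].

Definition limsup_nu : \bar R := limn_esup (fun n => (nu n)%:E).

Definition Ggt : set nat := [set k | limsup_nu < (nu k)%:E]%E.

Definition fbar (f : 'rV[R]_d -> \bar R) : \bar R := ereal_sup (f @` Xin).

Definition Fin (f : 'rV[R]_d -> \bar R) : Prop := (fbar f < +oo)%E.

Definition KLgen (gamma : R -> R -> R) : Prop :=
  (forall t, 0 <= t -> forall a b, a <= b -> gamma a t <= gamma b t) /\
  (forall a s t, 0 <= s -> s <= t -> gamma a t <= gamma a s).

Definition KL_Fin_upper_bound (gamma : R -> R -> R) (theta : 'rV[R]_d -> \bar R)
  : Prop :=
  KLgen gamma /\ (forall x, theta x != -oo%E) /\ Fin theta /\
  (forall (k : nat) x, Xin x -> phi (iter k T x) <= gamma (fine (theta x)) k%:R).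

Definition useful (gamma : R -> R -> R) (theta : 'rV[R]_d -> \bar R) : Prop :=
  exists k, Ggt k /\
    (ereal_inf ((fun t : R => (gamma (fine (fbar theta)) t)%:E) @`
                 [set t : R | (0 <= t)%R]) < (nu k)%:E)%E.

End Defs.

Definition Omega01 (R : realType) (h : R -> R) : Prop :=
  (forall x y : R, 0 <= x -> x < y -> y <= 1 -> h x < h y) /\
  {within `[(0:R), 1]%classic, continuous h}.

From HB Require Import structures.
From mathcomp Require Import all_boot all_order all_algebra.
From mathcomp Require Import all_classical all_reals all_analysis.
From mathcomp Require Import lra.
Set Implicit Arguments. Unset Strict Implicit. Unset Printing Implicit Defensive.
Import Order.TTheory GRing.Theory Num.Theory.
Import numFieldNormedType.Exports.
Local Open Scope classical_set_scope.
Local Open Scope ring_scope.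

(* Since gamma is increasing in its first argument, every trajectory starting
   in Xin is dominated by gamma (sup theta) k, so nu_k <= gamma (sup theta) k.
   Monotonicity in k bounds nu by M := gamma (sup theta) 0 everywhere and by
   gamma (sup theta) t0 for k >= t0.  Hence for any a above the latter bound,
   h(x) = a + C x works as soon as C e^{-k} >= M - a for all k < t0, and
   h 0 = a.  Choosing a = M gives the first claim; for a useful bound, a can be
   taken strictly between gamma (sup theta) t0 and some nu_{k0}. *)

Lemma fine_le_neqNy_ltey (R : realDomainType) (x y : \bar R) :
  x != -oo%E -> (y < +oo)%E -> (x <= y)%E -> fine x <= fine y.
Proof. by case: x => [x| |] //; case: y => [y| |]. Qed.

Lemma Omega01_affine (R : realType) (a C : R) :
  0 < C -> Omega01 (fun x => a + C * x).
Proof.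
move=> C0; split=> [x y _ xy _|]; first by rewrite ltrD2l ltr_pM2l.
apply: continuous_subspaceT => x.
by apply: continuousD; [exact: cvg_cst | apply: continuousM; [exact: cvg_cst | exact: cvg_id]].
Qed.

Lemma le_affine_expRN_of_bounded (R : realType) (s : nat -> R) (M a t0 : R) :
  (forall k, s k <= M) -> (forall k : nat, t0 <= k%:R -> s k <= a) ->
  exists2 C, 0 < C & forall k : nat, s k <= a + C * expR (- k%:R).
Proof.
move=> sM sa; set C := (`|M - a| + 1) * expR t0.
have C0 : 0 < C by rewrite mulr_gt0 ?expR_gt0 ?ltr_wpDl.
exists C => // k; have [t0k|kt0] := leP t0 k%:R.
  by apply: le_trans (sa k t0k) _; rewrite lerDl ltW ?mulr_gt0 ?expR_gt0.
have e1 : 1 <= expR t0 * expR (- k%:R).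
  by rewrite -expRD; apply: le_trans (expR_ge1Dx _); rewrite lerDl; lra.
have : `|M - a| + 1 <= C * expR (- k%:R).
  by rewrite -mulrA -{1}(mulr1 (`|M - a| + 1)) ler_pM2l ?ltr_wpDl.
by move: (sM k) (ler_norm (M - a)); lra.
Qed.

Lemma Omega01_majorant_expRN (R : realType) (s : nat -> R) (M a t0 : R) :
  (forall k, s k <= M) -> (forall k : nat, t0 <= k%:R -> s k <= a) ->
  exists h : R -> R,
    [/\ Omega01 h, forall k : nat, s k <= h (expR (- k%:R)) & h 0 = a].
Proof.
move=> sM sa; have [C C0 sC] := le_affine_expRN_of_bounded sM sa.
by exists (fun x => a + C * x); split; [exact: Omega01_affine | | rewrite mulr0 addr0].
Qed.

Section KLgen_upper_bound.
Variables (R : realType) (d : nat) (Xin : set 'rV[R]_d).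
Variables (T : 'rV[R]_d -> 'rV[R]_d) (phi : 'rV[R]_d -> R).
Variables (gamma : R -> R -> R) (theta : 'rV[R]_d -> \bar R).
Hypothesis Xin0 : Xin !=set0.
Hypothesis ub : KL_Fin_upper_bound Xin T phi gamma theta.

Lemma fine_le_fbar x : Xin x -> fine (theta x) <= fine (fbar Xin theta).
Proof.
have [_ [thetaN [thetaF _]]] := ub => Xx.
by apply: fine_le_neqNy_ltey => //; apply: ereal_sup_ubound; exists x.
Qed.

Lemma nu_le_gamma_fbar k : nu Xin T phi k <= gamma (fine (fbar Xin theta)) k%:R.
Proof.
have [[gamma_incr _] [_ [_ bound]]] := ub; have [x0 Xx0] := Xin0.
apply: ge_sup => [|_ [x Xx <-]]; first by exists (phi (iter k T x0)), x0.
by apply: le_trans (bound k x Xx) _; apply: gamma_incr => //; exact: fine_le_fbar.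
Qed.

Lemma nu_le_gamma_fbar_ge k t :
  0 <= t -> t <= k%:R -> nu Xin T phi k <= gamma (fine (fbar Xin theta)) t.
Proof.
have [[_ gamma_decr] _] := ub => t0 tk.
exact: le_trans (nu_le_gamma_fbar k) (gamma_decr _ _ _ t0 tk).
Qed.

End KLgen_upper_bound.

Theorem mainTheorem11 (R : realType) (d : nat) (Xin : set 'rV[R]_d)
  (T : 'rV[R]_d -> 'rV[R]_d) (phi : 'rV[R]_d -> R)
  (gamma : R -> R -> R) (theta : 'rV[R]_d -> \bar R) :
  Xin !=set0 ->
  phi 0 = 0 ->
  nu_finite Xin T phi ->
  KL_Fin_upper_bound Xin T phi gamma theta ->
  (exists h : R -> R, Omega01 h /\
     forall k : nat, nu Xin T phi k <= h (expR (- k%:R))) /\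
  (useful Xin T phi gamma theta ->
   exists h : R -> R, Omega01 h /\
     (forall k : nat, nu Xin T phi k <= h (expR (- k%:R))) /\
     exists k : nat, nu Xin T phi k > h 0).
Proof.
move=> Xin0 _ _ ub; set c := fine (fbar Xin theta).
have nuM k : nu Xin T phi k <= gamma c 0 := nu_le_gamma_fbar_ge Xin0 ub (lexx 0) (ler0n _ k).
split.
  have [h [hO hnu _]] := Omega01_majorant_expRN (t0 := 0) nuM (fun k _ => nuM k).
  by exists h.
move=> [k0 [_ /ereal_inf_lt [_ [t0 t0_ge0 <-]]]]; rewrite lte_fin => gamma_lt_nu.
pose a := (gamma c t0 + nu Xin T phi k0) / 2.
have nu_a k : t0 <= k%:R -> nu Xin T phi k <= a.
  by move=> t0k; move: (nu_le_gamma_fbar_ge Xin0 ub t0_ge0 t0k); rewrite /a; lra.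
have [h [hO hnu h0]] := Omega01_majorant_expRN nuM nu_a.
by exists h; split=> //; split=> //; exists k0; rewrite h0 /a; lra.
Qed.
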